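(* Let $A,L,\ddot L,G,\langle A_G\mid R_G\rangle,X=A\cup A_G,\mathsf f,\check{\mathsf f}$ be as in the context, and let $T$ be the semigroup defined by the presentation $\langle X\mid R_G\cup R_{\mathsf f}\rangle$. Then for every word $w\in X^+$, $w=\check{\mathsf f}(w)$ holds in $T$.
   Context: Let $A$ be an alphabet; for $w=a_1\cdots a_n\in A^+$, $w[p,q]=a_p\cdots a_q$, $w_\alpha=w[1,n-1]$, $w_\omega=w[2,n]$. $L\subseteq A^+$ is a non-empty factorial language (closed under non-empty factors) with $A\subseteq L$, $L^1=L\cup\{1\}$, and $\ddot L=\{v\in A^+: v\notin L,\ v_\alpha,v_\omega\in L\}$. For $w\in L$, $\mathrm{sc}_L[w]=(w)$; for $w\notin L$, letting $w[p_1,q_1],\dots,w[p_m,q_m]$ be all occurrences in $w$ of factors in $\ddot L$ from left to right, $\ddot w_i=w[p_i,q_i]$, $w_0=w[1,q_1-1]$, $w_m=w[p_m+1,n]$, $w_i=w[p_i+1,q_{i+1}-1]$ ($0<i<m$), and $\mathrm{sc}_L[w]=(w_0,\ddot w_1,w_1,\dots,\ddot w_m,w_m)$. $G$ is a group with semigroup presentation $\langle A_G\mid R_G\rangle$, $A_G\cap A=\emptyset$; each $g\in G$ is identified with a fixed word of $A_G^+$ representing it, and $e$ denotes the fixed word representing $1_G$. $X=A\cup A_G$, $\mathsf f:L\cup\ddot L\to G$ is a function, and $R_{\mathsf f}$ consists of the relations $eue=\mathsf f(u)$ for $u\in L$ and $\ddot v=\ddot v_\alpha\,\mathsf f(\ddot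 v)\,\ddot v_\omega$ for $\ddot v\in\ddot L$ (elements of $G$ written as their fixed representative words). $\hat{\mathsf f}:A^*\to G$: $\hat{\mathsf f}(1)=1_G$, $\hat{\mathsf f}(w)=\mathsf f(w)$ for $w\in L$, else $\hat{\mathsf f}(w)=\mathsf f(w_0)\mathsf f(\ddot w_1)\mathsf f(w_1)\cdots\mathsf f(\ddot w_m)\mathsf f(w_m)$. For $w\in A^+$: $\check{\mathsf f}(w)=w$ if $w\in L$, else $\check{\mathsf f}(w)=w_0\,g_w\,w_m$ with $g_w=\mathsf f(\ddot w_1)\mathsf f(w_1)\cdots\mathsf f(w_{m-1})\mathsf f(\ddot w_m)$. For $u\in A^*$: $\grave{\mathsf f}(u)=\acute{\mathsf f}(u)=u$ if $u\in L^1$; otherwise $\grave{\mathsf f}(u)=u_0(g_u\mathsf f(u_m))$, $\acute{\mathsf f}(u)=(\mathsf f(u_0)g_u)u_m$. For $w=u_0g_1u_1\cdots g_nu_n\in X^+\setminus A^+$ ($u_0,u_n\in A^*$, $u_1,\dots,u_{n-1}\in A^+$, $g_i\in A_G^+$): $\check{\mathsf f}(w)=\grave{\mathsf f}(u_0)g_1\hat{\mathsf f}(u_1)\cdots\hat{\mathsf f}(u_{n-1})g_n\acute{\mathsf f}(u_n)$, with adjacent group factors multiplied in $G$ and replaced by the fixed representative of the product. *)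

From HB Require Import structures.
From mathcomp Require Import ssreflect ssrfun ssrbool eqtype ssrnat seq choice monoid.
Set Implicit Arguments.
Unset Strict Implicit.
Unset Printing Implicit Defensive.

(* Words are [seq]s; A^+ = nonempty seqs.  Positions below are 0-based and
   [factor w i j] is the factor of w occupying positions i, ..., j-1
   (i.e. w[i+1, j] in the paper's 1-based notation). *)

(* For relations between nonempty words, restricted to
   nonempty words it is the equality of the semigroup <X | R>. *)
Inductive thue (X : Type) (R : seq X -> seq X -> Prop) : seq X -> seq X -> Prop :=
| thue_refl u : thue R u u
| thue_sym u v : thue R u v -> thue R v u
| thue_trans u v w : thue R u v -> thue R v w -> thue R u w
| thue_step p q u v : R u v -> thue R (p ++ u ++ q) (p ++ v ++ q).

Section Lang.
Variable A : Type.
Variable L : pred (seq A).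

Definition w_alpha (v : seq A) := take (size v).-1 v.
Definition w_omega (v : seq A) := behead v.

Definition Ldd (v : seq A) : bool :=
  [&& ~~ nilp v, ~~ L v, L (w_alpha v) & L (w_omega v)].

Definition factor (w : seq A) (i j : nat) := take (j - i) (drop i w).

Definition occs (w : seq A) : seq (nat * nat) :=
  [seq ij <- [seq (i, j) | i <- iota 0 (size w), j <- iota i.+1 (size w - i)]
     | Ldd (factor w ij.1 ij.2)].

Definition sc_dd (w : seq A) := [seq factor w ij.1 ij.2 | ij <- occs w].
Definition sc_first (w : seq A) := factor w 0 (head (0, 0) (occs w)).2.-1.
Definition sc_last (w : seq A) := factor w (last (0, 0) (occs w)).1.+1 (size w).
Definition sc_gaps (w : seq A) :=
  [seq factor w p.1.1.+1 p.2.2.-1 | p <- zip (occs w) (behead (occs w))].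
(* (\ddot w_1, w_1, ..., w_{m-1}, \ddot w_m) *)
Definition sc_mid (w : seq A) :=
  behead (flatten [seq [:: p.1; p.2] | p <- zip (sc_first w :: sc_gaps w) (sc_dd w)]).

Definition sc (w : seq A) : seq (seq A) :=
  if L w then [:: w] else sc_first w :: rcons (sc_mid w) (sc_last w).
End Lang.

Arguments Ldd {A} L v.

Section Functions.
Variables (A AG : Type) (G : groupType).
Variable L : pred (seq A).
Variable f : seq A -> G.
Variable gen : AG -> G.
Variable rep : G -> seq AG.

Local Open Scope group_scope.

Definition prodG (s : seq G) : G := foldr (fun g h => g * h) 1 s.

Definition evG (u : seq AG) : G := prodG (map gen u).

Definition fhat (w : seq A) : G :=
  if w is [::] then 1 else prodG (map f (sc L w)).

Definition gw (w : seq A) : G := prodG (map f (sc_mid L w)).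

Definition X := (A + AG)%type.

(* tokens: letters of A or elements of G (to be replaced by their words) *)
Definition tok := (A + G)%type.

Definition fcheckA_tok (w : seq A) : seq tok :=
  if L w then map inl w
  else map inl (sc_first L w) ++ [:: inr (gw w)] ++ map inl (sc_last L w).

Definition fgrave_tok (u : seq A) : seq tok :=
  if nilp u || L u then map inl u
  else map inl (sc_first L u) ++ [:: inr (gw u * f (sc_last L u))].
Definition facute_tok (u : seq A) : seq tok :=
  if nilp u || L u then map inl u
  else [:: inr (f (sc_first L u) * gw u)] ++ map inl (sc_last L u).

Fixpoint runs (w : seq X) : seq (seq A + seq AG) :=
  match w with
  | [::] => [::]
  | x :: w' =>
      let r := runs w' in
      match x, r with
      | inl a, inl u :: r' => inl (a :: u) :: r'
      | inl a, _ => inl [:: a] :: r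
      | inr b, inr g :: r' => inr (b :: g) :: r'
      | inr b, _ => inr [:: b] :: r
      end
  end.

Fixpoint merge (s : seq tok) : seq tok :=
  match s with
  | [::] => [::]
  | x :: s' =>
      match x, merge s' with
      | inr g, inr h :: r => inr (g * h) :: r
      | _, r => x :: r
      end
  end.

Definition flat (s : seq tok) : seq X :=
  flatten [seq match t with inl a => [:: inl a] | inr g => map inr (rep g) end
          | t <- s].

Definition is_letterA (x : X) : bool := if x is inl _ then true else false.
Definition letterA (x : X) : seq A := if x is inl a then [:: a] else [::].

Definition fcheck (w : seq X) : seq X :=
  if all is_letterA w then flat (merge (fcheckA_tok (flatten (map letterA w))))
  else
    let rs := runs w in
    let u0 := if rs is inl u :: _ then u else [::] in
    let rs1 := if rs is inl _ :: r then r else rs in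
    let un := if rev rs1 is inl u :: _ then u else [::] in
    let mid := if rev rs1 is inl _ :: r then rev r else rs1 in
    let tk (r : seq A + seq AG) : tok :=
        match r with inl u => inr (fhat u) | inr g => inr (evG g) end in
    flat (merge (fgrave_tok u0 ++ map tk mid ++ facute_tok un)).

Definition RT (RG : seq AG -> seq AG -> Prop) (u v : seq X) : Prop :=
  (exists a b, RG a b /\ u = map inr a /\ v = map inr b)
  \/ (exists x, L x /\ u = map inr (rep 1) ++ map inl x ++ map inr (rep 1)
                   /\ v = map inr (rep (f x)))
  \/ (exists x, Ldd L x /\ u = map inl x
                   /\ v = map inl (w_alpha x) ++ map inr (rep (f x))
                          ++ map inl (w_omega x)).
End Functions.

From Pilot Require Import Defs.
From mathcomp Require Import ssreflect ssrfun ssrbool eqtype ssrnat seq choice monoid.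
From mathcomp Require Import path zify.
From Stdlib Require Import Setoid Morphisms.
Set Implicit Arguments.
Unset Strict Implicit.
Unset Printing Implicit Defensive.

(* For w in A^+ \ L, the occurrences of factors in \ddot L never nest (every
   proper factor of a word of \ddot L lies in L), so both their start and end
   positions increase from left to right; for the same reason every gap
   w_i between two consecutive occurrences, as well as w_0 and w_m, lies in L.
   Applying the relation of \ddot L to the occurrences from left to right
   leaves each gap u between two group words; padding these with e, the
   relation eue = f(u) absorbs u, hence w = w_0 g_w w_m in T.  For a word
   over X, every inner maximal run u over A is squeezed between two group
   words and collapses to \hat f(u) by the same argument, the outer runs
   are handled with \grave f and \acute f, and adjacent group words are
   merged using the presentation of G. *)

Section Factors.
Variable A : Type.
Implicit Types (w : seq A).

Lemma factor_cat w i k j : i <= k <= j -> factor w i k ++ factor w k j = factor w i j.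
Proof.
move=> /andP[ik kj]; rewrite /factor.
have -> : j - i = (k - i) + (j - k) by lia.
by rewrite takeD drop_drop subnK.
Qed.

Lemma drop_factor w i j : i <= j -> drop i w = factor w i j ++ drop j w.
Proof.
by move=> ij; rewrite /factor -{1}(cat_take_drop (j - i) (drop i w)) drop_drop subnK.
Qed.

Lemma size_factor w i j : j <= size w -> size (factor w i j) = j - i.
Proof. by move=> js; rewrite /factor size_take_min size_drop; lia. Qed.

Lemma w_alpha_factor w i j :
  i < j -> j <= size w -> w_alpha (factor w i j) = factor w i j.-1.
Proof.
move=> ij js; rewrite /w_alpha size_factor // /factor -take_min; congr take; lia.
Qed.

Lemma w_omega_factor w i j : i < j -> w_omega (factor w i j) = factor w i.+1 j.
Proof.
move=> ij; rewrite /w_omega /factor.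
have -> : drop i.+1 w = behead (drop i w) by rewrite -drop1 drop_drop add1n.
have -> : j - i = (j - i.+1).+1 by lia.
by case: (drop i w).
Qed.

Lemma factor_full w : factor w 0 (size w) = w.
Proof. by rewrite /factor subn0 drop0 take_size. Qed.

Lemma factor_suffix w i : factor w i (size w) = drop i w.
Proof. by rewrite /factor take_oversize // size_drop. Qed.

Lemma factor_prefix w j : factor w 0 j = take j w.
Proof. by rewrite /factor subn0 drop0. Qed.

End Factors.

Section Occurrences.
Variable A : Type.
Variable L : pred (seq A).
Hypothesis L_factorial : forall x y z : seq A, y <> [::] -> L (x ++ y ++ z) -> L y.
Hypothesis L_letters : forall a : A, L [:: a].
Implicit Types (w : seq A).

Lemma size_Ldd v : Ldd L v -> 1 < size v.
Proof. by case: v => [|a [|b v]] //; rewrite /Ldd L_letters. Qed.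

Definition is_occ w (z : nat * nat) :=
  [&& z.1.+1 < z.2, z.2 <= size w & Ldd L (factor w z.1 z.2)].

Lemma Ldd_factor_nested w i j i' j' :
  j <= size w -> Ldd L (factor w i j) -> Ldd L (factor w i' j') ->
  i <= i' -> j' <= j -> i = i' /\ j = j'.
Proof.
move=> js D1 D2 ii' jj'.
have s1 := size_Ldd D1; have s2 := size_Ldd D2.
rewrite size_factor // in s1; rewrite size_factor in s2; last by lia.
have ne : factor w i' j' <> [::] by move=> e; move: (size_Ldd D2); rewrite e.
have nL : ~~ L (factor w i' j') by case/and4P: D2.
case: (ltnP i i') => [lt|ge].
  case/and4P: D1 => _ _ _; rewrite w_omega_factor; last by lia.
  rewrite -(@factor_cat _ _ _ i' _); last by lia.
  rewrite -(@factor_cat _ _ i' j' _); last by lia.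
  by move=> H; move: nL; rewrite (L_factorial ne H).
have ei : i = i' by lia.
split => //; case: (ltnP j' j) => [lt|ge']; last by lia.
case/and4P: D1 => _ _; rewrite w_alpha_factor //; last by lia.
rewrite -(@factor_cat _ _ _ j' _); last by lia.
rewrite ei => H _.
have := L_factorial (x := [::]) ne; rewrite /= => /(_ _ H).
by rewrite (negbTE nL).
Qed.

Lemma Ldd_factor_within w a b : a < b -> b <= size w -> ~~ L (factor w a b) ->
  exists i j, [/\ a <= i, j <= b, i < j & Ldd L (factor w i j)].
Proof.
move: {2}(b - a) (leqnn (b - a)) => d; elim: d a b => [|d IH] a b hd ab bs nL.
  by lia.
have [e|ne] := eqVneq b a.+1.
  move: nL; subst b.
  have : size (factor w a a.+1) = 1 by rewrite size_factor //; lia.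
  by case: (factor w a a.+1) => [|x [|]] // _; rewrite L_letters.
case La: (L (factor w a b.-1)); last first.
  have [i [j [h1 h2 h3 h4]]] := IH a b.-1 ltac:(lia) ltac:(lia) ltac:(lia) (negbT La).
  by exists i, j; split => //; lia.
case Lb: (L (factor w a.+1 b)); last first.
  have [i [j [h1 h2 h3 h4]]] := IH a.+1 b ltac:(lia) ltac:(lia) ltac:(lia) (negbT Lb).
  by exists i, j; split => //; lia.
exists a, b; split => //.
apply/and4P; split => //.
- by rewrite /nilp size_factor //; lia.
- by rewrite w_alpha_factor.
- by rewrite w_omega_factor.
Qed.

Lemma mem_occs w i j :
  ((i, j) \in occs L w) = [&& i < j, j <= size w & Ldd L (factor w i j)].
Proof.
rewrite /occs mem_filter /= andbC andbA; congr andb.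
apply/allpairsPdep/andP => [[x [y [xi yi [-> ->]]]]|[ij js]].
  by move: xi yi; rewrite !mem_iota; lia.
by exists i, j; rewrite !mem_iota; split => //; lia.
Qed.

Lemma occs_is_occ w z : z \in occs L w -> is_occ w z.
Proof.
case: z => i j; rewrite mem_occs => /and3P[ij js D].
rewrite /is_occ /= js D andbT.
by have := size_Ldd D; rewrite size_factor //; lia.
Qed.

Definition lex_lt (p q : nat * nat) := (p.1 < q.1) || ((p.1 == q.1) && (p.2 < q.2)).

Lemma pairwise_lex_row a b k : pairwise lex_lt [seq (a, j) | j <- iota b k].
Proof.
elim: k b => [|k IH] b //=; rewrite IH andbT.
by apply/allP => y /mapP[j]; rewrite mem_iota => jb ->; rewrite /lex_lt /= eqxx; lia.
Qed.

Lemma pairwise_lex_pairs a n N :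
  pairwise lex_lt [seq (i, j) | i <- iota a n, j <- iota i.+1 (N - i)].
Proof.
elim: n a => [|n IH] a //=.
rewrite pairwise_cat IH pairwise_lex_row !andbT.
apply/allrelP => x y /mapP[j _ ->] /allpairsPdep[i [k [ii _ ->]]].
by move: ii; rewrite mem_iota /lex_lt /=; lia.
Qed.

Lemma pairwise_occs w : pairwise lex_lt (occs L w).
Proof. exact/pairwise_filter/pairwise_lex_pairs. Qed.

Local Notation occ w k := (nth (0, 0) (occs L w) k).

Lemma is_occ_nth w k : k < size (occs L w) -> is_occ w (occ w k).
Proof. by move=> ks; apply/occs_is_occ/mem_nth. Qed.

(* Lexicographic order plus absence of nesting: both endpoints increase. *)
Lemma occs_nth_lt w k l : k < l -> l < size (occs L w) ->
  (occ w k).1 < (occ w l).1 /\ (occ w k).2 < (occ w l).2.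
Proof.
move=> kl ls; have ks : k < size (occs L w) by lia.
have /(pairwiseP (0, 0)) lex_occs := pairwise_occs w.
have := lex_occs k l ks ls kl.
have /and3P[_ x2 Dx] := is_occ_nth ks.
have /and3P[_ y2 Dy] := is_occ_nth ls.
rewrite /lex_lt => /orP[lt|/andP[/eqP e lt]].
  split => //; case: (ltnP (occ w k).2 (occ w l).2) => // ge.
  have [e _] := Ldd_factor_nested x2 Dx Dy (ltnW lt) ge; by move: lt; rewrite e ltnn.
have [_ e'] := Ldd_factor_nested y2 Dy Dx (eq_leq (esym e)) (ltnW lt).
by move: lt; rewrite e' ltnn.
Qed.

Lemma occs_nth_le w k l : k <= l -> l < size (occs L w) ->
  (occ w k).1 <= (occ w l).1 /\ (occ w k).2 <= (occ w l).2.
Proof.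
rewrite leq_eqVlt => /orP[/eqP -> //|kl ls].
by have [] := occs_nth_lt kl ls; split; apply: ltnW.
Qed.

Lemma L_factor_without_occs w a b : a < b -> b <= size w ->
  (forall k, k < size (occs L w) -> a <= (occ w k).1 -> (occ w k).2 <= b -> False) ->
  L (factor w a b).
Proof.
move=> ab bs noocc; apply/negPn/negP => nL.
have [i [j [ai jb ij D]]] := Ldd_factor_within ab bs nL.
have zin : (i, j) \in occs L w by rewrite mem_occs ij D andbT; lia.
by apply: (noocc (index (i, j) (occs L w))); rewrite ?index_mem ?nth_index.
Qed.

Lemma L_occs_gap w k : k.+1 < size (occs L w) ->
  L (factor w (occ w k).1.+1 (occ w k.+1).2.-1).
Proof.
move=> ks; have ks' : k < size (occs L w) by lia.
have /and3P[y1 y2 _] := is_occ_nth ks.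
have [o1 _] := occs_nth_lt (ltnSn k) ks.
apply: L_factor_without_occs; [lia | lia | move=> l ls al lb].
case: (leqP l k) => lk.
- by have [] := occs_nth_le lk ks'; lia.
- by have [] := occs_nth_le lk ls; lia.
Qed.

Lemma L_occs_first w : 0 < size (occs L w) -> L (factor w 0 (occ w 0).2.-1).
Proof.
move=> ks; have /and3P[x1 x2 _] := is_occ_nth ks.
apply: L_factor_without_occs; [lia | lia | move=> l ls _ lb].
by have [] := occs_nth_le (leq0n l) ls; lia.
Qed.

Lemma L_occs_last w : 0 < size (occs L w) ->
  L (factor w (occ w (size (occs L w)).-1).1.+1 (size w)).
Proof.
move=> ks; have ks' : (size (occs L w)).-1 < size (occs L w) by lia.
have /and3P[x1 x2 _] := is_occ_nth ks'.
apply: L_factor_without_occs; [lia | lia | move=> l ls al _].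
have lk : l <= (size (occs L w)).-1 by lia.
by have [] := occs_nth_le lk ks'; lia.
Qed.

Lemma size_occs_gt0 w : ~~ nilp w -> ~~ L w -> 0 < size (occs L w).
Proof.
move=> ne nL.
have ab : 0 < size w by case: (w) ne.
have nL' : ~~ L (factor w 0 (size w)) by rewrite factor_full.
have [i [j [_ js ij D]]] := Ldd_factor_within ab (leqnn _) nL'.
have zin : (i, j) \in occs L w by rewrite mem_occs ij js D.
by case: (occs L w) zin.
Qed.

Lemma L_sc_first w : ~~ nilp w -> ~~ L w -> L (sc_first L w).
Proof. by move=> ne nL; rewrite /sc_first -nth0; apply/L_occs_first/size_occs_gt0. Qed.

Lemma L_sc_last w : ~~ nilp w -> ~~ L w -> L (sc_last L w).
Proof. by move=> ne nL; rewrite /sc_last -nth_last; apply/L_occs_last/size_occs_gt0. Qed.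

Definition occ_link w (p q : nat * nat) :=
  [&& p.1 < q.1, p.2 < q.2 & L (factor w p.1.+1 q.2.-1)].

Lemma path_occs w : path (occ_link w) (head (0, 0) (occs L w)) (behead (occs L w)).
Proof.
have link k : k.+1 < size (occs L w) -> occ_link w (occ w k) (occ w k.+1).
  move=> ks; have [o1 o2] := occs_nth_lt (ltnSn k) ks.
  by rewrite /occ_link o1 o2 L_occs_gap.
move: link; case: (occs L w) => [//|x t] /= link.
by apply/(pathP (0, 0)) => i it; exact: link.
Qed.

End Occurrences.

Fixpoint occ_pieces (A : Type) (w : seq A) (t : seq (nat * nat)) : seq (seq A) :=
  match t with
  | [::] => [::]
  | x :: t' => factor w x.1 x.2 ::
      match t' with [::] => [::] | y :: _ => factor w x.1.+1 y.2.-1 :: occ_pieces w t' end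
  end.

Lemma flatten_zip_pieces (A : Type) (w : seq A) (t : seq (nat * nat)) z : t <> [::] ->
  flatten [seq [:: p.1; p.2] | p <- zip (z :: [seq factor w p.1.1.+1 p.2.2.-1
                                               | p <- zip t (behead t)])
                                    [seq factor w ij.1 ij.2 | ij <- t]]
  = z :: occ_pieces w t.
Proof.
elim: t z => [|x [|y t] IH] z // _.
by have /= -> := IH (factor w x.1.+1 y.2.-1).
Qed.

Lemma sc_midE (A : Type) (L : pred (seq A)) w : occs L w <> [::] ->
  sc_mid L w = occ_pieces w (occs L w).
Proof. by move=> ne; rewrite /sc_mid /sc_gaps /sc_dd flatten_zip_pieces. Qed.

Section Thue.
Variables (T : Type) (R : seq T -> seq T -> Prop).

Lemma thue_catlr p q u v : thue R u v -> thue R (p ++ u ++ q) (p ++ v ++ q).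
Proof.
elim=> {u v} [u|u v _ IH|u v w' _ IH1 _ IH2|p' q' u v H].
- exact: thue_refl.
- exact: thue_sym.
- exact: thue_trans IH2.
- by have := thue_step (p ++ p') (q' ++ q) H; rewrite -!catA.
Qed.

Global Instance thue_Equivalence : Equivalence (thue R).
Proof. split; [exact: thue_refl | exact: thue_sym | exact: thue_trans]. Qed.

Lemma thue_catr u v q : thue R u v -> thue R (u ++ q) (v ++ q).
Proof. exact: thue_catlr [::] q u v. Qed.

Lemma thue_catl u v p : thue R u v -> thue R (p ++ u) (p ++ v).
Proof. by move=> H; have := thue_catlr p [::] H; rewrite !cats0. Qed.

Global Instance cat_thue_Proper : Proper (thue R ==> thue R ==> thue R) (@cat T).
Proof.
move=> a b Hab c d Hcd; apply: (thue_trans (v := b ++ c)).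
  exact: thue_catr.
exact: thue_catl.
Qed.

Lemma thue_rel u v : R u v -> thue R u v.
Proof. by move=> H; have := thue_step [::] [::] H; rewrite /= !cats0. Qed.

End Thue.

#[global] Hint Resolve thue_refl : core.

Section Products.
Variable G : groupType.
Local Open Scope group_scope.

Lemma prodG_cat (s1 s2 : seq G) : prodG (s1 ++ s2) = prodG s1 * prodG s2.
Proof. by elim: s1 => [|x s IH] /=; rewrite ?mul1g // IH mulgA. Qed.

Lemma prodG_rcons (s : seq G) x : prodG (rcons s x) = prodG s * x.
Proof. by rewrite -cats1 prodG_cat /= mulg1. Qed.

Lemma evG_cat (AG : Type) (gen : AG -> G) a b : evG gen (a ++ b) = evG gen a * evG gen b.
Proof. by rewrite /evG map_cat prodG_cat. Qed.

End Products.

Section Runs.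
Variables (A AG : Type).
Local Notation inlX := (@inl A AG).
Local Notation inrX := (@inr A AG).

Definition is_Arun (r : seq A + seq AG) : bool := if r is inl _ then true else false.

Definition nonempty_run (r : seq A + seq AG) : bool :=
  match r with inl u => ~~ nilp u | inr g => ~~ nilp g end.

Definition run_switch (r r' : seq A + seq AG) : bool := is_Arun r != is_Arun r'.

Definition unruns (rs : seq (seq A + seq AG)) : seq (X A AG) :=
  flatten (map (fun r => match r with inl u => map inlX u | inr g => map inrX g end) rs).

Lemma runs_spec (w : seq (X A AG)) :
  [/\ unruns (runs w) = w, all nonempty_run (runs w) & sorted run_switch (runs w)].
Proof.
elim: w => [|x w [IH1 IH2 IH3]] //.
case: x => [a|b]; move: IH1 IH2 IH3; rewrite /=; case: (runs w) => [|[u|g] r].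
- by move=> <-.
- move=> <- /andP[_ Ha] Hs; split => //=; try by rewrite Ha.
  by case: r Hs {Ha}.
- by move=> <- Ha Hs; split => //=; rewrite ?Ha ?Hs.
- by move=> <- Ha Hs; split => //=; rewrite ?Ha ?Hs.
- by move=> <- Ha Hs; split => //=; try exact: Ha; try exact: Hs.
- move=> <- /andP[_ Ha] Hs; split => //=; try by rewrite Ha.
  by case: r Hs {Ha}.
Qed.

Lemma map_inl_letters (w : seq (X A AG)) :
  all (@is_letterA A AG) w -> map inlX (flatten (map (@letterA A AG) w)) = w.
Proof. by elim: w => [|[a|b] w IH] //= /IH {2}<-. Qed.

Lemma all_is_letterA_unruns rs : all is_Arun rs -> all (@is_letterA A AG) (unruns rs).
Proof.
elim: rs => [|[u|g] rs IH] //= /IH H.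
by rewrite /unruns /= all_cat H andbT; elim: u.
Qed.

Definition first_Arun (rs : seq (seq A + seq AG)) := if rs is inl u :: _ then u else [::].
Definition behead_Arun (rs : seq (seq A + seq AG)) := if rs is inl _ :: r then r else rs.
Definition last_Arun (rs : seq (seq A + seq AG)) := if rev rs is inl u :: _ then u else [::].
Definition belast_Arun (rs : seq (seq A + seq AG)) :=
  if rev rs is inl _ :: r then rev r else rs.

Lemma unruns_first_Arun rs : all nonempty_run rs -> sorted run_switch rs ->
  ~~ all is_Arun rs ->
  [/\ unruns rs = map inlX (first_Arun rs) ++ unruns (behead_Arun rs),
      all nonempty_run (behead_Arun rs), sorted run_switch (behead_Arun rs)
    & ~~ is_Arun (head (inl [::]) (behead_Arun rs))].
Proof.
case: rs => [|[u|g] r] //= Ha Hs Hn.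
split; first by [].
- by case/andP: Ha.
- exact: path_sorted Hs.
- by case: r Hs Hn {Ha} => [|[] r'].
Qed.

Lemma unruns_last_Arun s : all nonempty_run s -> sorted run_switch s ->
  ~~ is_Arun (head (inl [::]) s) ->
  [/\ unruns s = unruns (belast_Arun s) ++ map inlX (last_Arun s),
      all nonempty_run (belast_Arun s), sorted run_switch (belast_Arun s),
      ~~ is_Arun (head (inl [::]) (belast_Arun s))
    & ~~ is_Arun (last (inl [::]) (belast_Arun s))].
Proof.
case/lastP: s => [|r z] // Ha Hs Hh.
rewrite /belast_Arun /last_Arun rev_rcons; case: z Ha Hs Hh => [u|g] Ha Hs Hh.
- rewrite revK; split.
  + by rewrite /unruns -cats1 map_cat flatten_cat /= cats0.
  + by move: Ha; rewrite all_rcons => /andP[].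
  + by move: Hs; rewrite /sorted; case: r {Ha Hh} => //= r1 r'; rewrite rcons_path => /andP[].
  + by case: r Ha Hs Hh.
  + case: r Ha Hs Hh => [|r1 r'] //= _; rewrite rcons_path => /andP[_].
    by rewrite /run_switch; case: (last r1 r').
- by split; rewrite ?cats0 ?last_rcons.
Qed.

End Runs.

Arguments is_Arun {A AG}.
Arguments nonempty_run {A AG}.
Arguments run_switch {A AG}.

Section Presentation.
Variables (A AG : Type) (G : groupType).
Variable RG : seq AG -> seq AG -> Prop.
Variable gen : AG -> G.
Hypothesis presentation : forall u v : seq AG, u <> [::] -> v <> [::] ->
  (evG gen u = evG gen v <-> thue RG u v).
Variable rep : G -> seq AG.
Hypothesis rep_spec : forall g : G, rep g <> [::] /\ evG gen (rep g) = g.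
Variable L : pred (seq A).
Hypothesis L_factorial : forall x y z : seq A, y <> [::] -> L (x ++ y ++ z) -> L y.
Hypothesis L_letters : forall a : A, L [:: a].
Variable f : seq A -> G.

Local Notation R := (RT L f rep RG).
Local Notation inlX := (@inl A AG).
Local Notation inrX := (@inr A AG).
Local Open Scope group_scope.

Lemma nilp_rep g : nilp (rep g) = false.
Proof. by apply/negbTE/negP => /nilP; case: (rep_spec g). Qed.

Lemma evG_rep g : evG gen (rep g) = g.
Proof. by case: (rep_spec g). Qed.

Lemma thue_map_inr u v : thue RG u v -> thue R (map inrX u) (map inrX v).
Proof.
elim=> {u v} [u|u v _ IH|u v w' _ IH1 _ IH2|p q u v H].
- exact: thue_refl.
- exact: thue_sym.
- exact: thue_trans IH2.
- by rewrite !map_cat; apply: thue_step; left; exists u, v.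
Qed.

Lemma thue_evG a b : ~~ nilp a -> ~~ nilp b -> evG gen a = evG gen b ->
  thue R (map inrX a) (map inrX b).
Proof. by move=> /nilP na /nilP nb e; apply/thue_map_inr/presentation. Qed.

(* Pad both group words with e, then apply the relation e u e = f(u). *)
Lemma thue_absorb a b u : ~~ nilp a -> ~~ nilp b -> L u ->
  thue R (map inrX a ++ map inlX u ++ map inrX b) (map inrX (a ++ rep (f u) ++ b)).
Proof.
move=> na nb Lu.
have ea : thue R (map inrX a) (map inrX (a ++ rep 1)).
  by apply: thue_evG; rewrite ?cat_nilp ?nilp_rep /= ?andbF // evG_cat evG_rep mulg1.
have eb : thue R (map inrX b) (map inrX (rep 1 ++ b)).
  by apply: thue_evG; rewrite ?cat_nilp ?nilp_rep /= ?andbF // evG_cat evG_rep mul1g.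
rewrite {1}ea {1}eb !map_cat -!catA.
have := thue_step (map inrX a) (map inrX b)
  (_ : R (map inrX (rep 1) ++ map inlX u ++ map inrX (rep 1)) (map inrX (rep (f u)))).
by rewrite -!catA; apply; right; left; exists u.
Qed.

Lemma thue_absorb_cat a b u rest : ~~ nilp a -> ~~ nilp b -> L u ->
  thue R (map inrX a ++ map inlX u ++ map inrX b ++ rest)
         (map inrX (a ++ rep (f u) ++ b) ++ rest).
Proof. by move=> na nb Lu; have := thue_catr rest (thue_absorb na nb Lu); rewrite -!catA. Qed.

Lemma thue_occ_step w (x : nat * nat) : is_occ L w x ->
  thue R (map inlX (drop x.1 w))
    (map inlX (factor w x.1 x.2.-1) ++ map inrX (rep (f (factor w x.1 x.2)))
       ++ map inlX (drop x.1.+1 w)).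
Proof.
move=> /and3P[x1 x2 D]; have x12 : x.1 < x.2 by lia.
have Dstep : thue R (map inlX (factor w x.1 x.2))
   (map inlX (w_alpha (factor w x.1 x.2)) ++ map inrX (rep (f (factor w x.1 x.2)))
      ++ map inlX (w_omega (factor w x.1 x.2))).
  by apply: thue_rel; right; right; exists (factor w x.1 x.2).
rewrite (@drop_factor _ w x.1 x.2) 1?ltnW // map_cat Dstep.
rewrite w_alpha_factor // w_omega_factor // -!catA -map_cat -drop_factor; [reflexivity | lia].
Qed.

Lemma thue_occ_chain w x t : all (is_occ L w) (x :: t) -> path (occ_link L w) x t ->
  thue R (map inlX (drop x.1 w))
    (map inlX (factor w x.1 x.2.-1) ++ map inrX (rep (prodG (map f (occ_pieces w (x :: t)))))
       ++ map inlX (drop (last x t).1.+1 w)).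
Proof.
elim: t x => [|y t IH] x.
  move=> /andP[Ox _] _; rewrite /= mulg1; exact: thue_occ_step.
move=> /andP[Ox Oyt] /andP[/and3P[o1 o2 Lg] Pyt].
have /and3P[x1 x2 _] := Ox.
have /andP[/and3P[y1 _ _] _] := Oyt.
have -> : prodG (map f (occ_pieces w [:: x, y & t])) =
  f (factor w x.1 x.2) * (f (factor w x.1.+1 y.2.-1) * prodG (map f (occ_pieces w (y :: t)))).
  by [].
rewrite [last _ _]/= (thue_occ_step Ox).
rewrite (@drop_factor _ w x.1.+1 y.1); last by lia.
rewrite map_cat (IH y Oyt Pyt) [map inlX (factor w x.1.+1 y.1) ++ _]catA.
rewrite -map_cat factor_cat; last by lia.
rewrite thue_absorb_cat ?nilp_rep //.
apply/thue_catl/thue_catr/thue_evG; rewrite ?cat_nilp ?nilp_rep /= ?andbF //.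
by rewrite !evG_cat !evG_rep.
Qed.

Lemma thue_sc w : ~~ nilp w -> ~~ L w ->
  thue R (map inlX w)
    (map inlX (sc_first L w) ++ map inrX (rep (gw L f w)) ++ map inlX (sc_last L w)).
Proof.
move=> ne nL.
have occs_nil : occs L w <> [::].
  by have := size_occs_gt0 L_letters ne nL; case: (occs L w).
have Hall : all (is_occ L w) (occs L w).
  by apply/allP => z; apply: occs_is_occ.
have Hpath := path_occs L_factorial L_letters w.
rewrite /gw sc_midE // /sc_first /sc_last; move: occs_nil Hall Hpath.
case: (occs L w) => [//|x t] _ /= Hall Hpath.
have /andP[/and3P[x1 _ _] _] := Hall.
rewrite -{1}(cat_take_drop x.1 w) map_cat (thue_occ_chain Hall Hpath).
rewrite -factor_prefix !catA -map_cat factor_cat; last by lia.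
by rewrite -!catA factor_suffix; reflexivity.
Qed.

Lemma fhat_L u : ~~ nilp u -> L u -> fhat L f u = f u.
Proof. by case: u => // a u _ Lu; rewrite /fhat /sc Lu /= mulg1. Qed.

Lemma fhat_notL u : ~~ nilp u -> ~~ L u ->
  fhat L f u = f (sc_first L u) * (gw L f u * f (sc_last L u)).
Proof.
by case: u => // a u _ /negbTE nL; rewrite /fhat /sc nL /= map_rcons prodG_rcons.
Qed.

Lemma thue_absorb_fhat a b u : ~~ nilp a -> ~~ nilp b -> ~~ nilp u ->
  thue R (map inrX a ++ map inlX u ++ map inrX b) (map inrX (a ++ rep (fhat L f u) ++ b)).
Proof.
move=> na nb ne; case Lu: (L u).
  by rewrite fhat_L //; apply: thue_absorb.
have nL := negbT Lu.
rewrite thue_sc // -!catA thue_absorb_cat ?nilp_rep ?L_sc_first //.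
rewrite thue_absorb ?cat_nilp ?nilp_rep /= ?andbF ?L_sc_last //.
apply: thue_evG; rewrite ?cat_nilp ?nilp_rep /= ?andbF //.
by rewrite fhat_notL // !evG_cat !evG_rep !mulgA.
Qed.

Lemma flat_cat (s1 s2 : seq (tok A G)) : flat rep (s1 ++ s2) = flat rep s1 ++ flat rep s2.
Proof. by rewrite /flat map_cat flatten_cat. Qed.

Lemma flat_cons (t : tok A G) s : flat rep (t :: s) = flat rep [:: t] ++ flat rep s.
Proof. by rewrite -flat_cat. Qed.

Lemma flat_map_inl (u : seq A) : flat rep (map (@inl A G) u) = map inlX u.
Proof. by elim: u => [|a u IH] //; rewrite /= flat_cons IH. Qed.

Lemma flat_inr (g : G) : flat rep [:: inr g] = map inrX (rep g).
Proof. by rewrite /flat /= cats0. Qed.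

Lemma thue_merge s : thue R (flat rep s) (flat rep (Defs.merge s)).
Proof.
elim: s => [|x s IH]; first reflexivity.
case: x => [a|g].
  by rewrite /= flat_cons [flat rep (_ :: Defs.merge s)]flat_cons IH.
rewrite /=; case E: (Defs.merge s) => [|[a|h] r]; rewrite E in IH.
- by rewrite flat_cons IH [flat rep [::]]/= cats0.
- by rewrite flat_cons IH -flat_cons.
- rewrite flat_cons IH (flat_cons (inr h)) (flat_cons (inr (g * h))) !flat_inr catA -map_cat.
  apply/thue_catr/thue_evG; rewrite ?cat_nilp ?nilp_rep /= ?andbF //.
  by rewrite evG_cat !evG_rep.
Qed.

Lemma thue_fgrave u y : ~~ nilp y ->
  thue R (map inlX u ++ map inrX y) (flat rep (fgrave_tok L f u) ++ map inrX y).
Proof.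
move=> ny; rewrite /fgrave_tok; case: ifP => [_|/norP[ne nL]].
  by rewrite flat_map_inl.
rewrite thue_sc // flat_cat flat_map_inl flat_inr -!catA thue_absorb ?nilp_rep ?L_sc_last //.
rewrite -map_cat; apply/thue_catl/thue_evG; rewrite ?cat_nilp ?nilp_rep /= ?andbF //.
by rewrite !evG_cat !evG_rep mulgA.
Qed.

Lemma thue_facute u y : ~~ nilp y ->
  thue R (map inrX y ++ map inlX u) (map inrX y ++ flat rep (facute_tok L f u)).
Proof.
move=> ny; rewrite /facute_tok; case: ifP => [_|/norP[ne nL]].
  by rewrite flat_map_inl.
rewrite thue_sc // flat_cat flat_map_inl flat_inr thue_absorb_cat ?nilp_rep ?L_sc_first //.
rewrite [map inrX y ++ _]catA -map_cat.
apply/thue_catr/thue_evG; rewrite ?cat_nilp ?nilp_rep /= ?andbF //.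
by rewrite !evG_cat !evG_rep mulgA.
Qed.

Lemma thue_fcheckA w : ~~ nilp w ->
  thue R (map inlX w) (flat rep (Defs.merge (fcheckA_tok L f w))).
Proof.
move=> ne; apply: thue_trans (thue_merge _).
rewrite /fcheckA_tok; case: ifP => [_|/negbT nL]; first by rewrite flat_map_inl.
by rewrite thue_sc // !flat_cat !flat_map_inl flat_inr.
Qed.

Definition run_tok (r : seq A + seq AG) : tok A G :=
  match r with inl u => inr (fhat L f u) | inr g => inr (evG gen g) end.

Lemma thue_inner_runs n (m : seq (seq A + seq AG)) :
  size m <= n -> all nonempty_run m -> sorted run_switch m ->
  ~~ is_Arun (head (inl [::]) m) -> ~~ is_Arun (last (inl [::]) m) ->
  exists y, [/\ ~~ nilp y, flat rep (map run_tok m) = map inrX y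
              & thue R (unruns m) (map inrX y)].
Proof.
elim: n m => [|n IH] [|r m] //= sz.
case: r => [u|g] // /andP[neg Hall] Hs _.
case: m sz Hall Hs => [|[u|g'] m] sz Hall Hs Hlast.
- exists (rep (evG gen g)); split; rewrite ?nilp_rep ?flat_inr //.
  by rewrite /unruns /= cats0; apply: thue_evG; rewrite ?nilp_rep // evG_rep.
- case: m sz Hall Hs Hlast => [|r3 m] // sz /andP[neu Hall] /andP[_ /andP[Hd Hs]] Hlast.
  have Hr3 : ~~ is_Arun r3 by move: Hd; rewrite /run_switch; case: (r3).
  have [|y [ny Ey Ty]] := IH (r3 :: m) _ Hall Hs Hr3 Hlast; first by move: sz => /=; lia.
  exists (rep (evG gen g) ++ rep (fhat L f u) ++ y); split.
  + by rewrite cat_nilp nilp_rep.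
  + rewrite [map run_tok _]/= flat_cons (flat_cons (inr (fhat L f u))) !flat_inr Ey.
    by rewrite !map_cat.
  + have -> : unruns [:: inr g, inl u, r3 & m] = map inrX g ++ map inlX u ++ unruns (r3 :: m).
      by [].
    rewrite Ty thue_absorb_fhat //.
    apply: thue_evG; rewrite ?cat_nilp ?nilp_rep /= ?andbF //.
    by rewrite !evG_cat !evG_rep.
- by case/andP: Hs.
Qed.

Lemma thue_runs (rs : seq (seq A + seq AG)) :
  all nonempty_run rs -> sorted run_switch rs -> ~~ all is_Arun rs ->
  thue R (unruns rs)
    (flat rep (Defs.merge (fgrave_tok L f (first_Arun rs)
       ++ map run_tok (belast_Arun (behead_Arun rs))
       ++ facute_tok L f (last_Arun (behead_Arun rs))))).
Proof.
move=> Ha Hs Hn; apply: thue_trans (thue_merge _).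
have [-> a1 s1 h1] := unruns_first_Arun Ha Hs Hn.
have [-> a2 s2 h2 l2] := unruns_last_Arun a1 s1 h1.
have [y [ny Ey Ty]] := thue_inner_runs (leqnn _) a2 s2 h2 l2.
rewrite Ty !flat_cat Ey [map inlX (first_Arun rs) ++ _]catA (thue_fgrave _ ny).
by rewrite -catA (thue_facute _ ny).
Qed.

End Presentation.

Theorem lemma2
  (A AG : Type) (G : groupType)
  (* semigroup presentation <A_G | R_G> of G *)
  (RG : seq AG -> seq AG -> Prop) (gen : AG -> G)
  (HRG : forall u v, RG u v -> u <> [::] /\ v <> [::])
  (Hpres : forall u v : seq AG, u <> [::] -> v <> [::] ->
             (evG gen u = evG gen v <-> thue RG u v))
  (* fixed representative words *)
  (rep : G -> seq AG)
  (Hrep : forall g : G, rep g <> [::] /\ evG gen (rep g) = g)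
  (* nonempty factorial language L \subseteq A^+ containing A *)
  (L : pred (seq A))
  (HLne : exists w, L w)
  (HL0 : ~~ L [::])
  (HLfact : forall x y z : seq A, y <> [::] -> L (x ++ y ++ z) -> L y)
  (HLA : forall a : A, L [:: a])
  (f : seq A -> G)
  (w : seq (X A AG)) (Hw : w <> [::]) :
  thue (RT L f rep RG) w (fcheck L f gen rep w).
Proof.
rewrite /fcheck; case: ifP => letters.
  have ew := map_inl_letters letters.
  rewrite -{1}ew; apply: (thue_fcheckA Hpres Hrep HLfact HLA).
  by apply/nilP => e; apply: Hw; rewrite -ew e.
have [unrunsK nonempty_runs sorted_runs] := runs_spec w.
have mixed : ~~ all is_Arun (runs w).
  by apply: contraFN letters => /all_is_letterA_unruns; rewrite unrunsK.
by have := thue_runs Hpres Hrep HLfact HLA f nonempty_runs sorted_runs mixed; rewrite unrunsK.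
Qed.
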